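(* Let $G$ be a connected graph in $\mathcal{C}$ and $C$ an induced $C_5$ in $G$ with vertices $0,\dots,4$ in cyclic order. For every $i$, no vertex of $X_i$ has two non-adjacent neighbours in $X\setminus X_i$.
   Context: $\mathcal{C}=\mathrm{Free}(\text{claw}, 4K_1, \text{5-wheel}, C_5\text{-twin}, P_5\text{-twin}, K_5-e)$, where $\mathrm{Free}(L)$ is the class of graphs with no induced subgraph isomorphic to a member of $L$; the claw is $K_{1,3}$; $4K_1$ is the edgeless graph on 4 vertices; the 5-wheel is $C_5$ plus a vertex adjacent to all five cycle vertices; the $C_5$-twin is $C_5$ plus a new vertex adjacent to one cycle vertex $v$ and both cycle-neighbours of $v$; the $P_5$-twin is a path $p_1p_2p_3p_4p_5$ plus a new vertex adjacent to exactly $p_2,p_3,p_4$; $K_5-e$ is $K_5$ minus one edge. Given an induced cycle $C$ of length 5 with vertices $0,\dots,4$ in cyclic order (indices taken mod 5): $R$ is the set of vertices outside $C$ with no neighbour in $C$; $X_j$ is the set of vertices outside $C$ whose neighbourhood in $C$ is exactly $\{j,j+1\}$; $Y_j$ is the set of vertices outside $C$ whose neighbourhood in $C$ is exactly $\{j,j+1,j+2,j+3\}$; $X=\bigcup_j X_j$, $Y=\bigcup_j Y_j$. *)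

From mathcomp Require Import all_boot.
Set Implicit Arguments. Unset Strict Implicit. Unset Printing Implicit Defensive.

Definition simple_graph (T : finType) (e : rel T) : Prop :=
  symmetric e /\ irreflexive e.

Definition connected_graph (T : finType) (e : rel T) : Prop :=
  forall x y : T, connect e x y.

Definition induced_sub (n : nat) (H : rel 'I_n) (T : finType) (e : rel T) : Prop :=
  exists f : 'I_n -> T, injective f /\ forall i j, e (f i) (f j) = H i j.

Definition symc {n : nat} (h : nat -> nat -> bool) : rel 'I_n :=
  fun i j => h (val i) (val j) || h (val j) (val i).

Definition c5h (i j : nat) : bool := (i < 5) && (j < 5) && (j == i.+1 %% 5).

Definition claw : rel 'I_4 := symc (fun i j => (i == 0) && (0 < j)).
Definition fourK1 : rel 'I_4 := fun _ _ => false.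
Definition wheel5 : rel 'I_6 :=
  symc (fun i j => c5h i j || ((j == 5) && (i < 5))).
(* C_5-twin: C_5 on 0..4, new vertex 5 adjacent to 0 and its cycle-neighbours 1,4 *)
Definition C5twin : rel 'I_6 :=
  symc (fun i j => c5h i j || ((j == 5) && ((i == 0) || (i == 1) || (i == 4)))).
Definition P5twin : rel 'I_6 :=
  symc (fun i j => ((j == i.+1) && (j < 5)) ||
                     ((j == 5) && ((i == 1) || (i == 2) || (i == 3)))).
Definition K5e : rel 'I_5 :=
  fun i j => (i != j) && ~~ ((val i == 0) && (val j == 1))
                      && ~~ ((val i == 1) && (val j == 0)).

Definition in_class_C (T : finType) (e : rel T) : Prop :=
  simple_graph e /\
  ~ induced_sub claw e /\ ~ induced_sub fourK1 e /\ ~ induced_sub wheel5 e /\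
  ~ induced_sub C5twin e /\ ~ induced_sub P5twin e /\ ~ induced_sub K5e e.

Definition c5rel : rel 'I_5 := symc c5h.

Definition induced_C5 (T : finType) (e : rel T) (c : 'I_5 -> T) : Prop :=
  injective c /\ forall i j, e (c i) (c j) = c5rel i j.

(* v \in X_j : v outside C with neighbourhood in C exactly {j, j+1} (mod 5) *)
Definition inXj (T : finType) (e : rel T) (c : 'I_5 -> T) (j : 'I_5) (v : T) : bool :=
  (v \notin codom c) &&
  [forall k : 'I_5, e v (c k) == ((val k == val j) || (val k == (val j).+1 %% 5))].

Definition inX (T : finType) (e : rel T) (c : 'I_5 -> T) (v : T) : bool :=
  [exists j : 'I_5, inXj e c j v].

From mathcomp Require Import all_boot ssralg zmodp.
Set Implicit Arguments. Unset Strict Implicit. Unset Printing Implicit Defensive.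
Import GRing.Theory.

(** Rotating the cycle, we may assume [i = 0].  A vertex of [X_j] with [j <> 0]
    sees at most one of the neighbours [0], [1] of [v] on the cycle, and sees
    [0] only when [j = 4] and [1] only when [j = 1].  If [a] and [b] were
    non-adjacent, [v] would be the centre of a claw with leaves [a], [b] and a
    cycle neighbour of [v] missed by both, unless one of them, say [a], lies in
    [X_1] and the other in [X_4]; then [3 2 1 v b] is an induced path and [a]
    is adjacent exactly to its three middle vertices, a P5-twin. *)

Lemma P5twin_twin_free (x y : 'I_6) : (forall z, P5twin x z = P5twin y z) -> x = y.
Proof.
move=> H; apply/val_inj.
move: (H (inord 0)) (H (inord 1)) (H (inord 2)) (H (inord 3)) (H (inord 4)) (H (inord 5));
  clear H.
by case: x y => [[|[|[|[|[|[|?]]]]]] ?] [[|[|[|[|[|[|?]]]]]] ?] //=;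
  rewrite /P5twin /symc /= ?inordK.
Qed.

Lemma twin_free_inj (n : nat) (H : rel 'I_n) (T : finType) (e : rel T) (f : 'I_n -> T) :
  (forall x y, (forall z, H x z = H y z) -> x = y) ->
  (forall x y, e (f x) (f y) = H x y) -> injective f.
Proof. by move=> twin_free f_adj x y fxy; apply: twin_free => z; rewrite -!f_adj fxy. Qed.

Section InducedSubgraphs.
Variables (T : finType) (e : rel T).
Hypotheses (e_sym : symmetric e) (e_irr : irreflexive e).

Ltac adjacency_by_facts :=
  first [ exact: e_irr | done | apply/negbTE; done
        | rewrite e_sym; done | rewrite e_sym; apply/negbTE; done ].

Lemma induced_claw (x y z w : T) :
  e x y -> e x z -> e x w -> ~~ e y z -> ~~ e y w -> ~~ e z w ->
  uniq [:: y; z; w] -> induced_sub claw e.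
Proof.
move=> xy xz xw yz yw zw yzw_uniq.
have neq_of_adj p q : e p q -> p != q by apply: contraTneq => ->; rewrite e_irr.
have s_uniq : uniq [:: x; y; z; w].
  by rewrite cons_uniq yzw_uniq !inE !negb_or !neq_of_adj.
exists (fun i : 'I_4 => nth x [:: x; y; z; w] i); split.
  by move=> i j /eqP; rewrite nth_uniq // => /eqP /val_inj.
by move=> [[|[|[|[|?]]]] ?] [[|[|[|[|?]]]] ?] //=; rewrite /claw /symc /=;
  adjacency_by_facts.
Qed.

Lemma induced_P5twin (p1 p2 p3 p4 p5 t : T) :
  e p1 p2 -> e p2 p3 -> e p3 p4 -> e p4 p5 -> e t p2 -> e t p3 -> e t p4 ->
  ~~ e p1 p3 -> ~~ e p1 p4 -> ~~ e p1 p5 -> ~~ e p2 p4 -> ~~ e p2 p5 ->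
  ~~ e p3 p5 -> ~~ e t p1 -> ~~ e t p5 -> induced_sub P5twin e.
Proof.
move=> *; pose f (i : 'I_6) := nth t [:: p1; p2; p3; p4; p5; t] i.
have f_adj x y : e (f x) (f y) = P5twin x y.
  by case: x y => [[|[|[|[|[|[|?]]]]]] ?] [[|[|[|[|[|[|?]]]]]] ?] //=;
    rewrite /P5twin /symc /=; adjacency_by_facts.
by exists f; split; [apply: twin_free_inj P5twin_twin_free f_adj|].
Qed.

End InducedSubgraphs.

Section FiveCycle.
Local Open Scope ring_scope.

Definition in_edge (j k : 'I_5) : bool := (k == j) || (k == j + 1).

Lemma c5relE (k l : 'I_5) : c5rel k l = (l == k + 1) || (k == l + 1).
Proof. by case: k l => [[|[|[|[|[|?]]]]] ?] [[|[|[|[|[|?]]]]] ?]. Qed.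

Lemma c5relD (i k l : 'I_5) : c5rel (i + k) (i + l) = c5rel k l.
Proof. by rewrite !c5relE -!addrA !(inj_eq (addrI i)). Qed.

Lemma in_edgeD (i j k : 'I_5) : in_edge (i + j) (i + k) = in_edge j k.
Proof. by rewrite /in_edge -!addrA !(inj_eq (addrI i)). Qed.

Lemma in_edge_shift (i j k : 'I_5) : in_edge j (i + k) = in_edge (j - i) k.
Proof. by rewrite -[RHS](in_edgeD i) subrKC. Qed.

Lemma in_edge0 (j : 'I_5) : j != 0 -> in_edge j 0 = (j == 4).
Proof. by case: j => [[|[|[|[|[|?]]]]] ?]. Qed.

Lemma in_edge1 (j : 'I_5) : j != 0 -> in_edge j 1 = (j == 1).
Proof. by case: j => [[|[|[|[|[|?]]]]] ?]. Qed.

Lemma inXjP (T : finType) (e : rel T) (c : 'I_5 -> T) (j : 'I_5) (w : T) :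
  inXj e c j w -> w \notin codom c /\ forall k, e w (c k) = in_edge j k.
Proof.
case/andP=> wC /forallP w_nbr; split=> // k.
by rewrite (eqP (w_nbr k)) /in_edge -[k == j + 1]val_eqE /= addn1.
Qed.

End FiveCycle.

Section ClawFreeFiveCycle.
Local Open Scope ring_scope.
Variables (T : finType) (e : rel T).
Hypotheses (e_sym : symmetric e) (e_irr : irreflexive e).
Hypotheses (no_claw : ~ induced_sub claw e) (no_P5twin : ~ induced_sub P5twin e).
Variables (u : 'I_5 -> T) (v : T).
Hypothesis u_adj : forall k l, e (u k) (u l) = c5rel k l.
Hypothesis v_nbr : forall k, e v (u k) = in_edge 0 k.

Lemma X1_X4_adjacent (a b : T) :
  (forall k, e a (u k) = in_edge 1 k) -> (forall k, e b (u k) = in_edge 4 k) ->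
  e v a -> e v b -> e a b.
Proof.
move=> a_nbr b_nbr va vb; apply/idPn => nab; apply: no_P5twin.
apply: (induced_P5twin e_sym e_irr
  (p1 := u 3) (p2 := u 2) (p3 := u 1) (p4 := v) (p5 := b) (t := a));
  by rewrite ?(e_sym (u _) v) ?(e_sym (u _) b) ?(e_sym a v) ?u_adj ?v_nbr ?a_nbr ?b_nbr.
Qed.

Lemma X_nbrs_adjacent (a b : T) (j k : 'I_5) :
  j != 0 -> k != 0 -> a \notin codom u -> b \notin codom u ->
  (forall m, e a (u m) = in_edge j m) -> (forall m, e b (u m) = in_edge k m) ->
  e v a -> e v b -> a != b -> e a b.
Proof.
move=> nj0 nk0 aC bC a_nbr b_nbr va vb a_neq_b; apply/idPn => nab.
have off_cycle w m : w \notin codom u -> w != u m.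
  by move=> wC; apply: contraNneq wC => ->; exact: codom_f.
have seen m : e v (u m) -> e a (u m) || e b (u m).
  move=> vum; apply/idPn; rewrite negb_or => /andP [naum nbum]; apply: no_claw.
  apply: (induced_claw e_sym e_irr va vb vum nab naum nbum).
  by rewrite /= !inE negb_or a_neq_b !off_cycle.
have := seen 0 (v_nbr 0); have := seen 1 (v_nbr 1).
rewrite !a_nbr !b_nbr !in_edge0 ?in_edge1 //.
case/orP=> [/eqP j1 | /eqP k1] /orP [j4 | k4].
- by rewrite j1 in j4.
- apply: (negP nab); apply: X1_X4_adjacent => // m.
    by rewrite a_nbr j1.
  by rewrite b_nbr (eqP k4).
- apply: (negP nab); rewrite e_sym; apply: X1_X4_adjacent => // m.
    by rewrite b_nbr k1.
  by rewrite a_nbr (eqP j4).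
- by rewrite k1 in k4.
Qed.
End ClawFreeFiveCycle.

Theorem claim18 (T : finType) (e : rel T) (c : 'I_5 -> T) :
  in_class_C e -> connected_graph e -> induced_C5 e c ->
  forall (i : 'I_5) (v a b : T),
    inXj e c i v ->
    inX e c a -> ~~ inXj e c i a ->
    inX e c b -> ~~ inXj e c i b ->
    e v a -> e v b -> a != b -> e a b.
Proof.
move=> [[e_sym e_irr] [no_claw [_ [_ [_ [no_P5twin _]]]]]] _ [_ c_adj] i v a b
  /inXjP [_ v_nbr] /existsP [j Xja] aXi /existsP [k Xjb] bXi va vb nab.
pose u (m : 'I_5) := c (i + m)%R.
have u_adj m l : e (u m) (u l) = c5rel m l by rewrite c_adj c5relD.
have u_v_nbr m : e v (u m) = in_edge 0%R m.
  by rewrite v_nbr -[i in in_edge i]addr0 in_edgeD.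
have u_nbr l w : inXj e c l w -> forall m, e w (u m) = in_edge (l - i)%R m.
  by move=> /inXjP [_ w_nbr] m; rewrite w_nbr in_edge_shift.
have off_u l w : inXj e c l w -> w \notin codom u.
  by move=> /inXjP [wC _]; apply: contra wC => /codomP [m ->]; exact: codom_f.
have shift_nonzero l w : inXj e c l w -> ~~ inXj e c i w -> (l - i != 0)%R.
  by move=> Xlw; rewrite subr_eq0; apply: contraNneq => <-.
exact: (X_nbrs_adjacent e_sym e_irr no_claw no_P5twin u_adj u_v_nbr
  (shift_nonzero _ _ Xja aXi) (shift_nonzero _ _ Xjb bXi)
  (off_u _ _ Xja) (off_u _ _ Xjb) (u_nbr _ _ Xja) (u_nbr _ _ Xjb) va vb nab).
Qed.
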